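(* Let $p\in\mathbb{C}\setminus\{0\}$ and let $k\ge0$, $N\ge0$ be integers. Let $\mathcal{G}_{k,N}$ be the Lie algebra with $\mathbb{C}$-basis $\{J_{i,m}\mid 0\le i\le k,\ 0\le m\le N\}$ and brackets $[J_{i,m},J_{j,n}]=((j+p)(m+1)-(i+p)(n+1))J_{i+j,m+n}$ if $i+j\le k$ and $m+n\le N$, and $[J_{i,m},J_{j,n}]=0$ otherwise. If $V$ is a nontrivial finite-dimensional irreducible $\mathcal{G}_{k,N}$-module, then $\dim V=1$. *)

From HB Require Import structures.
From mathcomp Require Import all_boot all_order all_algebra.
From mathcomp Require Import complex.
From mathcomp Require Import Rstruct.
Set Implicit Arguments. Unset Strict Implicit. Unset Printing Implicit Defensive.
Import Order.TTheory GRing.Theory Num.Theory.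
Local Open Scope ring_scope.

Notation CC := (complex Rdefinitions.R).

(* Structure constant of G_{k,N}:
   [J_{i,m}, J_{j,n}] = ((j+p)(m+1) - (i+p)(n+1)) J_{i+j,m+n}. *)
Definition gcoef (p : CC) (i m j n : nat) : CC :=
  (j%:R + p) * (m.+1)%:R - (i%:R + p) * (n.+1)%:R.

(* A d-dimensional representation of G_{k,N}: a Lie algebra homomorphism
   G_{k,N} -> gl_d(C), given by the images rho i m of the basis vectors
   J_{i,m} (extended linearly); by bilinearity of both brackets it suffices
   to check the homomorphism property on pairs of basis vectors.
   Matrices act on column vectors of C^d. *)
Definition is_Grep (k N : nat) (p : CC) (d : nat)
    (rho : 'I_k.+1 -> 'I_N.+1 -> 'M[CC]_d) : Prop :=
  forall (i j : 'I_k.+1) (m n : 'I_N.+1),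
    rho i m *m rho j n - rho j n *m rho i m =
    if ((i : nat) + j <= k)%N && ((m : nat) + n <= N)%N
    then gcoef p i m j n *: rho (inord ((i : nat) + j)%N) (inord ((m : nat) + n)%N)
    else 0.

(* A subspace W of C^d (column vectors) is encoded as the row space of a
   matrix U, W = { u^T | u in rowspace U }.  W is invariant iff
   rho x W <= W, i.e. (U *m (rho x)^T <= U)%MS. *)
Definition Grep_stable (k N d : nat) (rho : 'I_k.+1 -> 'I_N.+1 -> 'M[CC]_d)
    (U : 'M[CC]_d) : Prop :=
  forall (i : 'I_k.+1) (m : 'I_N.+1), (U *m (rho i m)^T <= U)%MS.

Definition Grep_irreducible (k N d : nat) (rho : 'I_k.+1 -> 'I_N.+1 -> 'M[CC]_d)
    : Prop :=
  (0 < d)%N /\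
  forall U : 'M[CC]_d, Grep_stable rho U -> \rank U = 0%N \/ \rank U = d.

(* The algebra is graded by the total degree i + m, and brackets of positive
   degree elements raise it.  Going down from the top degree, let X be the image
   of J_{j,n}, of degree s > 0, while all images of higher degree vanish.  Then X
   commutes with the images of positive degree and [X, rho J_{0,0}] = (pn - j) X,
   so ker X is invariant and X is 0 or invertible.  An invertible X is ruled out
   by the trace: c X with c != 0 is never a commutator [Y, Z] with Y commuting
   with X, yet [X, rho J_{0,0}] = (pn - j) X and, when pn = j > 0,
   [rho J_{1,0}, rho J_{j-1,n}] = -(n+2) X.  Thus only rho J_{0,0} survives, and
   the line through one of its eigenvectors is invariant. *)

From HB Require Import structures.
From mathcomp Require Import all_boot all_order all_algebra.
From mathcomp Require Import complex Rstruct.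
From mathcomp Require Import ring zify.

Set Implicit Arguments.
Unset Strict Implicit.
Unset Printing Implicit Defensive.

Import Order.TTheory GRing.Theory Num.Theory.
Local Open Scope ring_scope.

Lemma mxtrace_mul_commutator (R : comPzRingType) n (W Y Z : 'M[R]_n) :
  W *m Y = Y *m W -> \tr (W *m (Y *m Z - Z *m Y)) = 0.
Proof.
move=> WY; rewrite mulmxBr raddfB /= mulmxA WY -mulmxA mxtrace_mulC.
by rewrite -mulmxA subrr.
Qed.

Lemma unitmx_commutator_scale_eq0 (R : numFieldType) n (X Y Z : 'M[R]_n) c :
  (0 < n)%N -> X \in unitmx -> X *m Y = Y *m X ->
  Y *m Z - Z *m Y = c *: X -> c = 0.
Proof.
move=> n_gt0 Xu XY YZ.
have XiY : invmx X *m Y = Y *m invmx X.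
  have := congr1 (fun M => invmx X *m M *m invmx X) XY => /=.
  by rewrite !mulmxA mulVmx // mul1mx -!mulmxA mulmxV // mulmx1.
have := mxtrace_mul_commutator Z XiY.
rewrite YZ -scalemxAr mulVmx // mxtraceZ mxtrace1 => /eqP.
by rewrite mulf_eq0 pnatr_eq0 => /orP[/eqP // | /eqP n0]; rewrite n0 in n_gt0.
Qed.

Lemma kermx_tr_stable (R : fieldType) n (X A : 'M[R]_n) c :
  X *m A = A *m X + c *: X -> (kermx X^T *m A^T <= kermx X^T)%MS.
Proof.
move=> XA; apply/sub_kermxP.
rewrite -mulmxA -trmx_mul XA linearD linearZ /= trmx_mul mulmxDr mulmxA.
by rewrite mulmx_ker mul0mx add0r -scalemxAr mulmx_ker scaler0.
Qed.

Section IrreducibleRepresentation.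

Variables (k N d : nat) (rho : 'I_k.+1 -> 'I_N.+1 -> 'M[CC]_d).
Hypothesis rho_irr : Grep_irreducible rho.

Lemma Grep_normalizing_eq0_or_unit (X : 'M_d) :
  (forall i m, exists c, X *m rho i m = rho i m *m X + c *: X) ->
  X = 0 \/ X \in unitmx.
Proof.
move=> X_norm.
have stab : Grep_stable rho (kermx X^T).
  by move=> i m; have [c] := X_norm i m; apply: kermx_tr_stable.
have := rank_leq_row X.
case: (rho_irr.2 _ stab); rewrite mxrank_ker mxrank_tr => rkX rkX_le.
- by right; rewrite -row_free_unit /row_free; apply/eqP; lia.
- by left; apply/eqP; rewrite -mxrank_eq0; apply/eqP; lia.
Qed.

Lemma Grep_common_eigenvector_dim1 (v : 'rV_d) :
  v != 0 -> (forall i m, stablemx v (rho i m)^T) -> d = 1%N.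
Proof.
move=> v_neq0 v_stab.
have stab : Grep_stable rho <<v>>%MS.
  by move=> i m; rewrite (eqmxMr _ (genmxE v)) genmxE.
by case: (rho_irr.2 _ stab); rewrite genmxE rank_rV v_neq0.
Qed.

End IrreducibleRepresentation.

Section GkNRepresentation.

Variables (p : CC) (k N d : nat) (rho : 'I_k.+1 -> 'I_N.+1 -> 'M[CC]_d).
Hypotheses (p_neq0 : p != 0) (rho_rep : is_Grep p rho).

Local Notation J i m := (rho (inord i) (inord m)).

Lemma rho_J (i : 'I_k.+1) (m : 'I_N.+1) : rho i m = J i m.
Proof. by rewrite !inord_val. Qed.

Lemma J_bracket i j m n :
  (i <= k)%N -> (j <= k)%N -> (m <= N)%N -> (n <= N)%N ->
  J i m *m J j n - J j n *m J i m =
  if (i + j <= k)%N && (m + n <= N)%N then gcoef p i m j n *: J (i + j) (m + n)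
  else 0.
Proof.
by move=> ik jk mN nN; have := rho_rep (inord i) (inord j) (inord m) (inord n);
  rewrite !inordK.
Qed.

Lemma J_bracket00 j n : (j <= k)%N -> (n <= N)%N ->
  J j n *m J 0 0 = J 0 0 *m J j n + (p * n%:R - j%:R) *: J j n.
Proof.
move=> jk nN; apply/eqP; rewrite addrC -subr_eq.
rewrite J_bracket // !addn0 jk nN /gcoef; apply/eqP; congr (_ *: _).
by rewrite -addn1 natrD; ring.
Qed.

Section TopDegree.

Variables (s j n : nat).
Hypotheses (s_gt0 : (0 < s)%N) (jk : (j <= k)%N) (nN : (n <= N)%N)
  (jn_s : (j + n)%N = s).
Hypothesis J_gt_s : forall i m, (i <= k)%N -> (m <= N)%N -> (s < i + m)%N ->
  J i m = 0.

Lemma J_top_comm_pos a b : (a <= k)%N -> (b <= N)%N -> (0 < a + b)%N ->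
  J j n *m J a b = J a b *m J j n.
Proof.
move=> ak bN ab_gt0; apply/eqP; rewrite -subr_eq0 J_bracket //.
by case: ifP => // /andP[ja nb]; rewrite J_gt_s ?scaler0 //; lia.
Qed.

Lemma J_top_not_unit : (0 < d)%N -> J j n \notin unitmx.
Proof.
move=> d_gt0; apply/negP => Xu.
have pn_j : p * n%:R = j%:R.
  apply/eqP; rewrite -subr_eq0; apply/eqP.
  apply: (unitmx_commutator_scale_eq0 (Z := J 0 0) d_gt0 Xu erefl).
  by rewrite J_bracket00 // addrC addKr.
have j_gt0 : (0 < j)%N.
  rewrite lt0n; apply/negP => /eqP j0; move: pn_j; rewrite j0 => /eqP.
  rewrite mulf_eq0 pnatr_eq0 (negPf p_neq0) /= => /eqP n0.
  by move: s_gt0; rewrite -jn_s j0 n0.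
have k_gt0 : (1 <= k)%N by lia.
have := J_bracket k_gt0 (leq_trans (leq_pred j) jk) (leq0n N) nN.
rewrite add1n prednK // add0n jk nN /=.
have -> : gcoef p 1 0 j.-1 n = - (n.+2)%:R.
  rewrite /gcoef -subn1 natrB // -pn_j -[n.+2]addn2 -[n.+1]addn1 !natrD; ring.
move/(unitmx_commutator_scale_eq0 d_gt0 Xu (J_top_comm_pos k_gt0 (leq0n N) isT)).
by move/eqP; rewrite oppr_eq0 pnatr_eq0.
Qed.

Lemma J_top_eq0 : Grep_irreducible rho -> J j n = 0.
Proof.
move=> rho_irr.
have X_norm i m : exists c, J j n *m rho i m = rho i m *m J j n + c *: J j n.
  rewrite (rho_J i m).
  have ik : (i <= k)%N by rewrite -ltnS.
  have mN : (m <= N)%N by rewrite -ltnS.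
  have [/eqP|im_gt0] := posnP (i + m).
    by rewrite addn_eq0 => /andP[/eqP-> /eqP->]; eexists; apply: J_bracket00.
  by exists 0; rewrite scale0r addr0; apply: J_top_comm_pos.
have [//|Xu] := Grep_normalizing_eq0_or_unit rho_irr X_norm.
by case/negP: (J_top_not_unit rho_irr.1).
Qed.

End TopDegree.

Lemma J_pos_eq0 i m : Grep_irreducible rho ->
  (i <= k)%N -> (m <= N)%N -> (0 < i + m)%N -> J i m = 0.
Proof.
move=> rho_irr.
suff J_gt t : forall i m, (i <= k)%N -> (m <= N)%N -> (k + N - t < i + m)%N ->
    J i m = 0.
  by move=> ik mN im_gt0; apply: (J_gt (k + N)%N) => //; lia.
elim: t => [|t IHt] {}i {}m ik mN im_gt; first lia.
apply: (J_top_eq0 (s := (i + m)%N)) => //; first lia.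
by move=> a b ak bN ab_gt; apply: IHt => //; lia.
Qed.

End GkNRepresentation.

Theorem lemma3p3 (p : CC) (k N d : nat) (rho : 'I_k.+1 -> 'I_N.+1 -> 'M[CC]_d) :
  p != 0 -> is_Grep p rho -> Grep_irreducible rho -> d = 1%N.
Proof.
move=> p_neq0 rho_rep rho_irr.
have [a /eigenvalueP[v v_eig v_neq0]] :=
  eigenvalue_closed (rho ord0 ord0)^T rho_irr.1.
apply: (Grep_common_eigenvector_dim1 rho_irr v_neq0) => i m.
have [/eqP|im_gt0] := posnP (i + m).
  rewrite addn_eq0 => /andP[/eqP i0 /eqP m0].
  have -> : i = ord0 by apply: val_inj.
  have -> : m = ord0 by apply: val_inj.
  by rewrite v_eig scalemx_sub.
by rewrite rho_J (J_pos_eq0 p_neq0 rho_rep) ?trmx0 ?mulmx0 ?sub0mx // -ltnS.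
Qed.
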